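(* Let $k$ be a field of characteristic $p>0$, $m\ge1$, and let $G=\ker(F:W_m\to W_m)$, the finite group scheme with Hopf algebra $R=k[x_0,\dots,x_{m-1}]/(x_0^p,\dots,x_{m-1}^p)$ (comultiplication given by Witt vector addition). Let $M$ be a finite-dimensional $R$-comodule with comodule map $c_M$ and $v\in M\setminus\{0\}$. Write $c_M(v)=\sum_{\underline i\in\{0,\dots,p-1\}^m}v_{\underline i}\otimes\underline x^{\underline i}$, where $\underline x^{\underline i}=\prod_{\nu=0}^{m-1}x_\nu^{i_\nu}$. Order $\{0,\dots,p-1\}^m$ by $\underline i\succeq\underline i'$ iff $\sum_\nu i_\nu p^\nu\ge\sum_\nu i'_\nu p^\nu$. If $\underline j$ is maximal among the $\underline i$ with $v_{\underline i}\ne0$, then $v_{\underline j}\in M^G$.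
   Context: $W_m$ is the group scheme of truncated Witt vectors of length $m$ over $k$, $F$ the relative Frobenius $(a_0,\dots,a_{m-1})\mapsto(a_0^p,\dots,a_{m-1}^p)$. An $R$-comodule is a $k$-vector space $M$ with a $k$-linear map $c_M:M\to M\otimes_kR$ satisfying coassociativity $(\mathrm{id}\otimes c)\circ c_M=(c_M\otimes\mathrm{id})\circ c_M$ and the counit axiom $(\mathrm{id}\otimes u)\circ c_M=\mathrm{id}$; equivalently a representation of $G$ on $M$. $M^G=\{w\in M:c_M(w)=w\otimes1\}$. *)

From HB Require Import structures.
From mathcomp Require Import all_boot all_order all_algebra.
From mathcomp Require Import mpoly.
Set Implicit Arguments. Unset Strict Implicit. Unset Printing Implicit Defensive.
Import Order.TTheory GRing.Theory Num.Theory.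
Local Open Scope ring_scope.

Definition midx (p m : nat) := {ffun 'I_m -> 'I_p}.

(* The variables X_nu = x_nu (x) 1 and Y_nu = 1 (x) x_nu of k[X,Y] (2m variables). *)
Definition wX (m : nat) (nu : 'I_m) : {mpoly int[m + m]} := 'X_(lshift m nu).
Definition wY (m : nat) (nu : 'I_m) : {mpoly int[m + m]} := 'X_(rshift m nu).

(* S_0, ..., S_{m-1} are the Witt vector addition polynomials (over Z):
   they are characterized (uniquely, Z[X,Y] being torsion free) by the
   ghost-component identities
     sum_{k<=n} p^k S_k^(p^(n-k)) = sum_{k<=n} p^k (X_k^(p^(n-k)) + Y_k^(p^(n-k))). *)
Definition witt_add_polys (p m : nat) (S : 'I_m -> {mpoly int[m + m]}) : Prop :=
  forall n : 'I_m,
    \sum_(k < m | (k <= n)%N) (p ^ k)%:R * S k ^+ (p ^ (n - k))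
    = \sum_(k < m | (k <= n)%N)
        (p ^ k)%:R * (wX k ^+ (p ^ (n - k)) + wY k ^+ (p ^ (n - k))).

Definition monXY (p m : nat) (j l : midx p m) : 'X_{1..m + m} :=
  [multinom (match split t with inl a => nat_of_ord (j a)
                                 | inr b => nat_of_ord (l b) end) | t < m + m].

(* Structure constants of the comultiplication of
   R = k[x_0..x_{m-1}]/(x_nu^p) in the monomial basis:
   Delta(x^i) = prod_nu S_nu(x (x) 1, 1 (x) x)^(i_nu)
              = sum_{j,l} wcomul S i j l  x^j (x) x^l
   (reduction modulo (X_nu^p, Y_nu^p) just keeps the coefficients of the
   monomials with all exponents < p; the integer coefficients are mapped to k). *)
Definition wcomul (k : fieldType) (p m : nat) (S : 'I_m -> {mpoly int[m + m]})
  (i j l : midx p m) : k :=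
  ((\prod_(nu < m) S nu ^+ i nu) @_ (monXY j l))%:~R.

Definition midx0 (p m : nat) (H : (0 < p)%N) : midx p m := [ffun _ => Ordinal H].

(* An R-comodule structure on the finite-dimensional k-space M, written in the
   monomial basis of R: c_M(v) = sum_i (D i v) (x) x^i, with D i : 'End(M)
   (k-linearity of c_M is linearity of every D i). *)
Definition is_comodule (k : fieldType) (p m : nat) (H : (0 < p)%N)
  (S : 'I_m -> {mpoly int[m + m]}) (M : vectType k) (D : midx p m -> 'End(M)) : Prop :=
  (* counit axiom: (id (x) u) o c_M = id, where u(x^i) = [i = 0] *)
  (forall v : M, D (midx0 m H) v = v) /\
  (* coassociativity: (id (x) Delta) o c_M = (c_M (x) id) o c_M *)
  (forall (j l : midx p m) (v : M),
      D j (D l v) = \sum_(i : midx p m) wcomul k S i j l *: D i v).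

(* M^G = { w | c_M(w) = w (x) 1 } *)
Definition comod_invariant (k : fieldType) (p m : nat) (H : (0 < p)%N)
  (M : vectType k) (D : midx p m -> 'End(M)) (w : M) : Prop :=
  forall i : midx p m, D i w = (if i == midx0 m H then w else 0).

Definition midx_weight (p m : nat) (i : midx p m) : nat :=
  (\sum_(nu < m) i nu * p ^ nu)%N.

(* Give the variables X_nu and Y_nu of Z[X,Y] the weight p^nu.  Comparing
   weights in the ghost-component identities shows, by induction on n, that the
   Witt addition polynomial S_n is homogeneous of weight p^n (Z[X,Y] is torsion
   free, so the factor p^n in front of S_n can be cancelled).  Hence Delta(x^i)
   only involves monomials x^j (x) x^l with weight j + weight l = weight i.
   Coassociativity then writes the i-th coefficient of c_M(v_j) as a combination
   of the v_i' with weight i' = weight i + weight j, which vanish by maximality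
   of j unless i = 0. *)
From HB Require Import structures.
From mathcomp Require Import all_boot all_order all_algebra.
From mathcomp Require Import mpoly.
Set Implicit Arguments. Unset Strict Implicit. Unset Printing Implicit Defensive.
Import Order.TTheory GRing.Theory Num.Theory.

Local Open Scope ring_scope.

Lemma dhomogMn_cancel (R : numDomainType) n (mf : measure n) d
    (q : {mpoly R[n]}) c :
  (0 < c)%N -> q *+ c \is d.-homog for mf -> q \is d.-homog for mf.
Proof.
move=> c_gt0 /dhomogP hom_qc; apply/dhomogP => t t_q; apply: hom_qc.
by rewrite mcoeff_msupp mcoeffMn mulrn_eq0 negb_or -lt0n c_gt0 -mcoeff_msupp.
Qed.

Section WittWeight.

Variables (p m : nat).
Hypothesis p_gt0 : (0 < p)%N.

(* The variable s is X_s for s < m and Y_(s - m) otherwise: its index is s %% m. *)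
Definition witt_weight (t : 'X_{1..m + m}) : nat :=
  (\sum_(s < m + m) t s * p ^ (s %% m))%N.

Lemma witt_weight0 : witt_weight 0%MM = 0%N.
Proof. by rewrite /witt_weight big1 // => s _; rewrite mnm0E. Qed.

Lemma witt_weightD : {morph witt_weight : t u / (t + u)%MM >-> (t + u)%N}.
Proof.
move=> t u; rewrite /witt_weight -big_split.
by apply: eq_bigr => s _; rewrite mnmDE mulnDl.
Qed.

HB.instance Definition _ :=
  isMeasure.Build (m + m) witt_weight witt_weight0 witt_weightD.

Local Notation "d .-whomog" := (d.-homog for witt_weight)
  (at level 1, format "d .-whomog").

Lemma witt_weightU (s : 'I_(m + m)) : witt_weight U_(s)%MM = (p ^ (s %% m))%N.
Proof.
rewrite /witt_weight (bigD1 s) //= mnm1E eqxx mul1n big1 ?addn0 // => s' ne_s's.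
by rewrite mnm1E eq_sym (negbTE ne_s's).
Qed.

Lemma dhomogXn (s : 'I_(m + m)) e :
  ('X_s : {mpoly int[m + m]}) ^+ e \is (p ^ (s %% m) * e).-whomog.
Proof. by apply: dhomogMn; rewrite dhomogX /= witt_weightU. Qed.

Lemma lshift_modn (nu : 'I_m) : (lshift m nu %% m)%N = nu.
Proof. exact: modn_small (ltn_ord nu). Qed.

Lemma rshift_modn (nu : 'I_m) : (rshift m nu %% m)%N = nu.
Proof. by rewrite /= modnDl modn_small. Qed.

Lemma dhomog_witt_add_polys (S : 'I_m -> {mpoly int[m + m]}) :
  witt_add_polys p S -> forall n, S n \is (p ^ n).-whomog.
Proof.
move=> HS n; have [N] := ubnP n; elim: N n => // N IH n; rewrite ltnS => le_nN.
have := HS n; rewrite (bigD1 n) //= subnn expn0 expr1 => /(canRL (addrK _)) def_Sn.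
apply: (@dhomogMn_cancel _ _ _ _ _ (p ^ n)); first by rewrite expn_gt0 p_gt0.
have weight_pow k : (k <= n)%N -> (p ^ k * p ^ (n - k))%N = (p ^ n)%N.
  by move=> le_kn; rewrite -expnD subnKC.
rewrite -mulr_natl def_Sn; apply: rpredB; apply: rpred_sum => k.
  move=> le_kn; rewrite mulr_natl; apply/rpredMn/rpredD.
    by have := dhomogXn (lshift m k) (p ^ (n - k)); rewrite lshift_modn weight_pow.
  by have := dhomogXn (rshift m k) (p ^ (n - k)); rewrite rshift_modn weight_pow.
case/andP=> ne_kn le_kn; rewrite mulr_natl; apply: rpredMn.
have lt_kn : (k < n)%N by rewrite ltn_neqAle ne_kn le_kn.
rewrite -(weight_pow k) //; apply: dhomogMn; apply: IH.
exact: leq_trans lt_kn le_nN.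
Qed.

Lemma witt_weight_monXY (a b : midx p m) :
  witt_weight (monXY a b) = (midx_weight a + midx_weight b)%N.
Proof.
rewrite /witt_weight big_split_ord /midx_weight.
congr (_ + _)%N; apply: eq_bigr => nu _; rewrite mnmE.
  by rewrite (unsplitK (inl nu : 'I_m + 'I_m)) lshift_modn.
by rewrite (unsplitK (inr nu : 'I_m + 'I_m)) rshift_modn.
Qed.

Lemma dhomog_witt_prod (S : 'I_m -> {mpoly int[m + m]}) (i : midx p m) :
  witt_add_polys p S -> \prod_(nu < m) S nu ^+ i nu \is (midx_weight i).-whomog.
Proof.
move=> HS; rewrite /midx_weight.
apply: (big_ind2 (fun d (q : {mpoly int[m + m]}) => q \is d.-whomog)).
- exact: dhomog1.
- by move=> d q e r; apply: dhomogM.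
- by move=> nu _; rewrite mulnC; apply/dhomogMn/dhomog_witt_add_polys.
Qed.

Lemma wcomul_eq0 (k : fieldType) (S : 'I_m -> {mpoly int[m + m]})
    (i j l : midx p m) :
  witt_add_polys p S -> midx_weight i != (midx_weight j + midx_weight l)%N ->
  wcomul k S i j l = 0.
Proof.
move=> HS ne_weight; rewrite /wcomul.
rewrite (@dhomog_nemf_coeff _ _ witt_weight (midx_weight i)) //.
  exact: dhomog_witt_prod.
by rewrite /= witt_weight_monXY eq_sym.
Qed.

Lemma midx_weight_gt0 (i : midx p m) : i != midx0 m p_gt0 -> (0 < midx_weight i)%N.
Proof.
apply: contraR; rewrite -leqNgt leqn0 => /eqP weight_i0.
apply/eqP/ffunP => nu; rewrite ffunE; apply: val_inj => /=.
have : (i nu * p ^ nu <= 0)%N.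
  by rewrite -weight_i0 /midx_weight (bigD1 nu) //= leq_addr.
by rewrite leqn0 muln_eq0 expn_eq0 (gtn_eqF p_gt0) orbF => /eqP.
Qed.

End WittWeight.

Theorem corollary3p10 (k : fieldType) (p m : nat) (Hp : (0 < p)%N)
  (pchar_k : p \in [pchar k]) (Hm : (1 <= m)%N)
  (S : 'I_m -> {mpoly int[m + m]}) (HS : witt_add_polys p S)
  (M : vectType k) (D : midx p m -> 'End(M)) (HM : @is_comodule k p m Hp S M D)
  (v : M) (Hv : v != 0) (j : midx p m)
  (Hj : D j v != 0)
  (Hmax : forall i : midx p m, D i v != 0 ->
            ~ (midx_weight j < midx_weight i)%N) :
  @comod_invariant k p m Hp M D (D j v).
Proof.
case: HM => counit coassoc i.
have [->|i_ne0] := eqVneq i (midx0 m Hp); first exact: counit.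
rewrite coassoc big1 // => i' _.
have [->|Di'v_ne0] := eqVneq (D i' v) 0; first by rewrite scaler0.
rewrite wcomul_eq0 ?scale0r //; apply: contra_notN (Hmax i' Di'v_ne0) => /eqP ->.
by rewrite -{1}[midx_weight j]add0n ltn_add2r (midx_weight_gt0 i_ne0).
Qed.
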